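(* Let $G$ be a graph whose twin graph $G^*$ is isomorphic to $K_1+P_4$, where the degree-4 vertex is of any type and the other four vertices are of type (1K); furthermore, no two non-adjacent vertices of $G^*$ are both of type (K), and no two adjacent vertices of $G^*$ are such that one is of type (K) and the other of type (N). Then $D(G)\neq n(G)-2$.
   Context: All graphs are finite and simple; $n(G)=|V(G)|$; $N_G(u)$ is the neighborhood of $u$; $P_4$ is the path on four vertices and the join $G+H$ is obtained from the disjoint union of $G$ and $H$ by adding all edges between $V(G)$ and $V(H)$. A distinguishing coloring of a graph $G$ is a (not necessarily proper) vertex coloring such that the only automorphism of $G$ mapping every vertex to a vertex of the same color is the identity; the distinguishing number $D(G)$ is the minimum number of colors in a distinguishing coloring of $G$. Two distinct vertices $u,v$ are twins if $N_G(u)\setminus\{v\}=N_G(v)\setminus\{u\}$. The relation $u\equiv v$ iff $u=v$ or $u,v$ are twins is an equivalence relation; the class of $v$ is denoted $v^*$. The twin graph $G^*$ has the equivalence classes as vertices, distinct classes $u^*,v^*$ being adjacent iff $uv\in E(G)$. Each class induces a complete or an edgeless graph. A class $v^*$ is of type (1) if $|v^*|=1$, of type (K) if $|v^*|\ge 2$ and it induces a complete graph, and of type (N) if $|v^*|\ge2$ and it induces an edgeless graph; type (1K) means type (1) or (K), type (1N) means (1) or (N), and type (KN) means (K) or (N). *)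

From mathcomp Require Import all_boot all_fingroup.
Set Implicit Arguments. Unset Strict Implicit. Unset Printing Implicit Defensive.

Section Graphs.
Variables (T : finType) (e : rel T).

(* u, v distinct twins: N(u)\{v} = N(v)\{u}  (for simple graphs this means
   e u w = e v w for every w outside {u,v}) *)
Definition twins (u v : T) : bool :=
  (u != v) && [forall w, ((w != u) && (w != v)) ==> (e u w == e v w)].

Definition tclass (v : T) : {set T} := [set u | (u == v) || twins u v].

Definition twin_classes : {set {set T}} := [set tclass v | v in T].

Definition twin_adj (A B : {set T}) : bool :=
  (A != B) && [exists u in A, exists v in B, e u v].

Definition type_1 (A : {set T}) : bool := #|A| == 1.
Definition type_K (A : {set T}) : bool :=
  (2 <= #|A|) && [forall u in A, forall v in A, (u != v) ==> e u v].
Definition type_N (A : {set T}) : bool :=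
  (2 <= #|A|) && [forall u in A, forall v in A, ~~ e u v].

Definition is_aut (p : {perm T}) : bool :=
  [forall x, forall y, e (p x) (p y) == e x y].

Definition distinguishing (k : nat) (c : T -> 'I_k) : bool :=
  [forall p : {perm T}, (is_aut p && [forall x, c (p x) == c x]) ==> (p == 1%g)].

Definition has_dist_coloring (k : nat) : bool :=
  [exists c : {ffun T -> 'I_k}, distinguishing c].

(* D(G): least k admitting a distinguishing coloring with k colors
   (k = #|T| always works, so the search range 0..#|T| suffices) *)
Definition dist_number : nat := find has_dist_coloring (iota 0 #|T|.+1).

End Graphs.

(* K_1 + P_4 on 'I_5: vertex 0 is the K_1, vertices 1-2-3-4 form the path *)
Definition K1P4_adj (i j : 'I_5) : bool :=
  (i != j) && [|| i == 0 :> nat, j == 0 :> nat, i.+1 == j | j.+1 == i].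

From mathcomp Require Import all_boot all_fingroup.
From mathcomp Require Import zify.
Set Implicit Arguments. Unset Strict Implicit. Unset Printing Implicit Defensive.

(* Pick one representative in each twin class: the twin graph H = G^* is then
   the subgraph of G induced by the representatives.  Colour the
   representatives by a distinguishing colouring of H and give every other
   vertex a colour of its own.  A colour-preserving automorphism fixes every
   non-representative, hence permutes the representatives and induces a
   colour-preserving automorphism of H, so it is the identity; thus
   D(G) <= n(G) - n(H) + D(H).  For H = K_1 + P_4 we have D(H) = 2, because
   fixing one end of the path fixes everything, so D(G) <= n(G) - 3. *)

Section TwinClasses.
Variables (T : finType) (e : rel T).
Hypothesis e_sym : symmetric e.

Lemma twinsP u v :
  reflect (u != v /\ forall w, w != u -> w != v -> e u w = e v w) (twins e u v).
Proof.
apply: (iffP andP) => [[uv /forallP uvw] | [uv uvw]]; split=> //.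
  by move=> w wu wv; apply/eqP; apply: (implyP (uvw w)); rewrite wu wv.
by apply/forallP => w; apply/implyP => /andP[wu wv]; rewrite uvw.
Qed.

Lemma twins_sym u v : twins e u v -> twins e v u.
Proof.
by case/twinsP => uv uvw; apply/twinsP; split=> [|w wv wu]; rewrite 1?eq_sym ?uvw.
Qed.

Lemma tclass_refl v : v \in tclass e v.
Proof. by rewrite inE eqxx. Qed.

Lemma tclass_sym u v : (u \in tclass e v) = (v \in tclass e u).
Proof.
by rewrite !inE; apply/idP/idP => /orP[/eqP-> | /twins_sym ->]; rewrite ?eqxx ?orbT.
Qed.

Lemma tclass_trans u v w : u \in tclass e v -> v \in tclass e w -> u \in tclass e w.
Proof.
rewrite !inE => /orP[/eqP-> // | uv] /orP[/eqP<- | vw]; first by rewrite uv orbT.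
have [-> // | uw] := eqVneq u w; apply/orP; right; apply/twinsP; split=> // x xu xw.
case/twinsP: uv => uv uvx; case/twinsP: vw => vw vwx.
have [-> | xv] := eqVneq x v; last by rewrite uvx ?vwx.
have wu : w != u by rewrite eq_sym.
have wv : w != v by rewrite eq_sym.
by rewrite [e u v]e_sym (vwx u) // [e w u]e_sym uvx // e_sym.
Qed.

Lemma eq_tclass u v : u \in tclass e v -> tclass e u = tclass e v.
Proof.
move=> uv; apply/setP => w; apply/idP/idP => [wu | wv]; first exact: tclass_trans uv.
by apply: tclass_trans wv _; rewrite tclass_sym.
Qed.

Lemma edge_tclass_out a u w :
  u \in tclass e a -> w \notin tclass e a -> e u w = e a w.
Proof.
move=> ua wNa; have wu : w != u by apply: contraNneq wNa => ->.
have wa : w != a by apply: contraNneq wNa => ->; apply: tclass_refl.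
by move: ua; rewrite inE => /orP[/eqP-> // | /twinsP[_ uaw]]; apply: uaw.
Qed.

Lemma edge_tclass a b u v : u \in tclass e a -> v \in tclass e b ->
  tclass e a != tclass e b -> e u v = e a b.
Proof.
move=> ua vb ab.
have vNa : v \notin tclass e a.
  by apply: contra ab => va; rewrite -(eq_tclass va) (eq_tclass vb).
have aNb : a \notin tclass e b.
  by apply: contra ab => ab'; rewrite (eq_tclass ab').
by rewrite (edge_tclass_out ua vNa) e_sym (edge_tclass_out vb aNb) e_sym.
Qed.

Lemma twin_adj_tclass a b :
  tclass e a != tclass e b -> twin_adj e (tclass e a) (tclass e b) = e a b.
Proof.
move=> ab; rewrite /twin_adj ab; apply/existsP/idP => [[u] | ab_edge].
  by case/andP => ua /existsP[v /andP[vb]]; rewrite (edge_tclass ua vb).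
by exists a; rewrite tclass_refl; apply/existsP; exists b; rewrite tclass_refl.
Qed.

Hypothesis e_irr : irreflexive e.

Lemma twin_class_representatives (I : finType) (g : I -> {set T}) :
  injective g -> (forall i, g i \in twin_classes e) ->
  exists2 r : I -> T, injective r & forall i j, e (r i) (r j) = twin_adj e (g i) (g j).
Proof.
move=> g_inj g_cl.
have /all_sig[r g_r] i : {v | g i == tclass e v}.
  by apply: sigW; case/imsetP: (g_cl i) => v _ ->; exists v.
have {}g_r i : g i = tclass e (r i) by apply/eqP.
exists r => [i j rij | i j]; first by apply: g_inj; rewrite !g_r rij.
have [<- | ij] := eqVneq i j; first by rewrite e_irr /twin_adj eqxx.
have gij : g i != g j by apply: contra_neq ij; apply: g_inj.
by rewrite !g_r twin_adj_tclass // -!g_r.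
Qed.

End TwinClasses.

Section ExtendColoring.
Variables (T I : finType) (e : rel T) (a : rel I) (r : I -> T).
Hypotheses (r_inj : injective r) (r_adj : forall i j, e (r i) (r j) = a i j).
Variables (k : nat) (c : I -> 'I_k).
Hypothesis c_dist : distinguishing a c.

Let S := [set r i | i in I].
Let rest := enum (~: S).

Definition extend_coloring (x : T) : nat :=
  if [pick i | r i == x] is Some i then c i else k + index x rest.

Lemma extend_coloring_r i : extend_coloring (r i) = c i.
Proof.
by rewrite /extend_coloring; case: pickP => [j /eqP/r_inj -> // | /(_ i)]; rewrite eqxx.
Qed.

Lemma extend_coloring_out x : x \notin S -> extend_coloring x = k + index x rest.
Proof.
rewrite /extend_coloring => xS; case: pickP => // i /eqP rix.
by rewrite -rix imset_f in xS.
Qed.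

Lemma extend_coloring_ltk x : (extend_coloring x < k) = (x \in S).
Proof.
case: (boolP (x \in S)) => [/imsetP[i _ ->] | xS].
  by rewrite extend_coloring_r ltn_ord.
by rewrite extend_coloring_out // ltnNge leq_addr.
Qed.

Lemma extend_coloring_lt x : extend_coloring x < k + (#|T| - #|I|).
Proof.
case: (boolP (x \in S)) => [/imsetP[i _ ->] | xS].
  by rewrite extend_coloring_r (leq_trans (ltn_ord _)) ?leq_addr.
have : index x rest < size rest by rewrite index_mem mem_enum inE.
by rewrite extend_coloring_out // ltn_add2l -(cardsC S) card_imset // addKn cardE.
Qed.

Lemma has_dist_coloring_extend : has_dist_coloring e (k + (#|T| - #|I|)).
Proof.
apply/existsP; exists [ffun x => Ordinal (extend_coloring_lt x)].
apply/forallP => p; apply/implyP => /andP[/forallP p_aut /forallP p_col].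
have p_adj x y : e (p x) (p y) = e x y by apply/eqP; apply: (forallP (p_aut x)).
have p_ext x : extend_coloring (p x) = extend_coloring x.
  by have := p_col x; rewrite !ffunE => /eqP[].
have p_S x : (p x \in S) = (x \in S) by rewrite -!extend_coloring_ltk p_ext.
have p_out x : x \notin S -> p x = x.
  move=> xS; have pxS : p x \notin S by rewrite p_S.
  have := p_ext x; rewrite !extend_coloring_out // => /addnI eq_index.
  by rewrite -[p x](nth_index x (s := rest)) ?eq_index ?nth_index // mem_enum inE.
have /all_sig[s p_r] i : {j | p (r i) == r j}.
  apply: sigW; have /imsetP[j _ ->] : p (r i) \in S by rewrite p_S imset_f.
  by exists j.
have {}p_r i : p (r i) = r (s i) by apply/eqP.
have s_inj : injective s.
  by move=> i j sij; apply/r_inj/(@perm_inj _ p); rewrite !p_r sij.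
have s_id : perm s_inj = 1%g.
  apply/eqP; apply: (implyP (forallP c_dist (perm s_inj))); apply/andP; split.
    by apply/forallP => i; apply/forallP => j; rewrite !permE -!r_adj -!p_r p_adj.
  apply/forallP => i; rewrite permE; apply/eqP/ord_inj.
  by rewrite -!extend_coloring_r -p_r p_ext.
apply/eqP/permP => x; rewrite perm1.
case: (boolP (x \in S)) => [/imsetP[i _ ->] | /p_out //].
by rewrite p_r -[s i]permE s_id perm1.
Qed.

End ExtendColoring.

Lemma dist_number_le (T : finType) (e : rel T) k :
  has_dist_coloring e k -> k <= #|T| -> dist_number e <= k.
Proof.
move=> col_k k_le; rewrite leqNgt; apply/negP => k_lt.
by have := before_find 0 k_lt; rewrite nth_iota ?add0n ?col_k // ltnS.
Qed.

Definition K1P4_adjn (m n : nat) : bool :=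
  (m != n) && [|| m == 0, n == 0, m.+1 == n | n.+1 == m].

Lemma K1P4_adjE (i j : 'I_5) : K1P4_adj i j = K1P4_adjn i j.
Proof. by []. Qed.

(* Checked on [nat]: evaluation over ['I_5] gets stuck on the opaque proofs
   inside [insub] and [card]. *)
Lemma K1P4_adjn_rigid :
  let I5 := iota 0 5 in
  all (fun c0 => all (fun c2 => all (fun c3 => all (fun c4 =>
    let v := [:: c0; 1; c2; c3; c4] in
    all (fun i => all (fun j =>
      K1P4_adjn (nth 0 v i) (nth 0 v j) == K1P4_adjn i j) I5) I5
    ==> (v == I5)) I5) I5) I5) I5.
Proof. by vm_compute. Qed.

Lemma K1P4_adjn_rigid_seq (v : seq nat) :
  size v = 5 -> {subset v <= iota 0 5} -> nth 0 v 1 = 1 ->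
  all (fun i => all (fun j =>
    K1P4_adjn (nth 0 v i) (nth 0 v j) == K1P4_adjn i j) (iota 0 5)) (iota 0 5) ->
  v = iota 0 5.
Proof.
case: v => [|c0 [|c1 [|c2 [|c3 [|c4 [|]]]]]] //= _ v_lt5 c1E v_aut; subst c1.
have [h0 h2 h3 h4] : [/\ c0 \in iota 0 5, c2 \in iota 0 5, c3 \in iota 0 5
                        & c4 \in iota 0 5].
  by split; apply: v_lt5; rewrite !inE eqxx ?orbT.
by move: K1P4_adjn_rigid =>
  /allP/(_ c0 h0)/allP/(_ c2 h2)/allP/(_ c3 h3)/allP/(_ c4 h4)/implyP/(_ v_aut)/eqP.
Qed.

Lemma K1P4_aut_fix1 (s : 'I_5 -> 'I_5) :
  (forall i j, K1P4_adj (s i) (s j) = K1P4_adj i j) -> s (inord 1) = inord 1 ->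
  s =1 id.
Proof.
move=> s_adj s1.
pose v := [seq val (s i) | i <- enum 'I_5].
have nth_v (i : 'I_5) : nth 0 v i = s i.
  by rewrite (nth_map i) ?size_enum_ord // nth_ord_enum.
have v_iota : v = iota 0 5.
  apply: K1P4_adjn_rigid_seq; first by rewrite size_map size_enum_ord.
  - by move=> m /mapP[i _ ->]; rewrite mem_iota ltn_ord.
  - by have := nth_v (inord 1); rewrite s1 !inordK.
  apply/allP => i; rewrite mem_iota => /andP[_ i5]; apply/allP => j.
  rewrite mem_iota => /andP[_ j5].
  by rewrite -[i]/(val (Ordinal i5)) -[j]/(val (Ordinal j5)) !nth_v -!K1P4_adjE s_adj.
by move=> i; apply: val_inj; rewrite /= -nth_v v_iota nth_iota.
Qed.

Definition K1P4_coloring (i : 'I_5) : 'I_2 := inord (i == 1 :> nat).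

Lemma K1P4_distinguishing : distinguishing K1P4_adj K1P4_coloring.
Proof.
apply/forallP => p; apply/implyP => /andP[/forallP p_aut /forallP p_col].
have p_adj i j : K1P4_adj (p i) (p j) = K1P4_adj i j.
  by apply/eqP; apply: (forallP (p_aut i)).
have p1 : p (inord 1) = inord 1.
  have i1 : (inord 1 : 'I_5) = 1 :> nat by rewrite inordK.
  have := p_col (inord 1); rewrite /K1P4_coloring i1 => /eqP/(congr1 (@nat_of_ord 2)).
  rewrite !inordK ?ltnS ?leq_b1 //.
  by case: eqP => // p1 _; apply: ord_inj; rewrite p1 i1.
by apply/eqP/permP => i; rewrite perm1 (K1P4_aut_fix1 p_adj p1).
Qed.

Theorem lemma4p9 (T : finType) (e : rel T)
  (e_sym : symmetric e) (e_irr : irreflexive e)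
  (g : 'I_5 -> {set T})
  (g_inj : injective g)
  (g_onto : [set g i | i : 'I_5] = twin_classes e)
  (g_iso : forall i j, twin_adj e (g i) (g j) = K1P4_adj i j)
  (h1K : forall i : 'I_5, i != 0 :> nat -> type_1 (g i) || type_K e (g i))
  (hKK : forall i j, i != j -> ~~ K1P4_adj i j ->
           ~~ (type_K e (g i) && type_K e (g j)))
  (hKN : forall i j, K1P4_adj i j -> ~~ (type_K e (g i) && type_N e (g j))) :
  dist_number e <> #|T| - 2.
Proof.
have g_cl i : g i \in twin_classes e by rewrite -g_onto imset_f.
have [r r_inj r_adj] := twin_class_representatives e_sym e_irr g_inj g_cl.
have r_K1P4 i j : e (r i) (r j) = K1P4_adj i j by rewrite r_adj g_iso.
have n_ge5 : 5 <= #|T| by rewrite -[5](card_ord 5) (leq_card _ r_inj).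
have D_le : dist_number e <= 2 + (#|T| - 5).
  apply: dist_number_le; last lia.
  rewrite -[5](card_ord 5).
  exact: (has_dist_coloring_extend r_inj r_K1P4 K1P4_distinguishing).
lia.
Qed.
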